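(* Let $L_5=\{-3,-2,-1,0,1\}$ with its natural linear order. Define the games $\star=\{-1\mid -3\}$, and for any game $G$: $\mathsf{M}(G)=\{1\mid G\}$, $\mathsf{P}(G)=\{G\mid -2\}$, $\mathsf{P}_\star(G)=\{G\mid \star\}$. For $n\in\mathbb{N}$ let $\mathsf{P}_n(G)=\mathsf{P}(G)$ if $n$ is odd and $\mathsf{P}_n(G)=\mathsf{P}_\star(G)$ if $n$ is even. Define $G_0=0$ (the atomic game $[0]$) and $G_{n+1}=\mathsf{M}(\mathsf{P}_n(G_n))$. Then for every $n\ge 0$, the game $G_n$ is monotone.
   Context: Games over a poset $A$ of atoms are defined inductively: for each $a\in A$, $[a]$ is a game (atomic; often written simply $a$); whenever $L,R$ are non-empty sets of games, $\{L\mid R\}$ is a game (composite), with left options the elements of $L$ and right options the elements of $R$; $\{G_1,\dots,G_n\mid H_1,\dots,H_m\}$ denotes $\{\{G_1,\dots,G_n\}\mid\{H_1,\dots,H_m\}\}$. A position of $G$ is $G$ itself, an option of $G$, an option of an option, etc. Relations $\le$ and $\lhd$ on games are defined by mutual recursion: $G\le H$ iff (1) every left option $G^L$ of $G$ satisfies $G^L\lhd H$, (2) every right option $H^R$ of $H$ satisfies $G\lhd H^R$, and (3) if $G$ or $H$ is atomic then $G\lhd H$. $G\lhd H$ iff (1) some right option $G^R$ of $G$ satisfies $G^R\le H$, or (2) some left option $H^L$ of $H$ satisfies $G\le H^L$, or (3) $G=[a]$, $H=[b]$ are atomic with $a\le b$ in $A$. A game $G$ is locally monotone if every left option satisfies $G\le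 G^L$ and every right option satisfies $G^R\le G$; it is monotone if every position of $G$ is locally monotone. *)

From Stdlib Require Import List Arith.
Import ListNotations.
Set Implicit Arguments.

Inductive game (A : Type) : Type :=
| Atom : A -> game A
| Comp : list (game A) -> list (game A) -> game A.
Arguments Atom {A} _.
Arguments Comp {A} _ _.

Definition is_atom {A} (G : game A) : Prop :=
  match G with Atom _ => True | Comp _ _ => False end.

Definition left_opt {A} (G X : game A) : Prop :=
  match G with Atom _ => False | Comp L _ => In X L end.

Definition right_opt {A} (G X : game A) : Prop :=
  match G with Atom _ => False | Comp _ R => In X R end.

(* G <= H and G <| H, defined by mutual (well-founded) recursion;
   rendered as mutually inductive predicates (least fixpoint = the
   recursive definition, since each clause refers to smaller pairs). *)
Inductive gle {A} (leA : A -> A -> Prop) : game A -> game A -> Prop :=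
| gle_intro G H :
    (forall GL, left_opt G GL -> glt leA GL H) ->
    (forall HR, right_opt H HR -> glt leA G HR) ->
    (is_atom G \/ is_atom H -> glt leA G H) ->
    gle leA G H
with glt {A} (leA : A -> A -> Prop) : game A -> game A -> Prop :=
| glt_right G H GR : right_opt G GR -> gle leA GR H -> glt leA G H
| glt_left G H HL : left_opt H HL -> gle leA G HL -> glt leA G H
| glt_atom a b : leA a b -> glt leA (Atom a) (Atom b).

Inductive position {A} : game A -> game A -> Prop :=
| pos_self G : position G G
| pos_left G X P : left_opt G X -> position X P -> position G P
| pos_right G X P : right_opt G X -> position X P -> position G P.

Definition locally_monotone {A} (leA : A -> A -> Prop) (G : game A) : Prop :=
  (forall GL, left_opt G GL -> gle leA G GL) /\
  (forall GR, right_opt G GR -> gle leA GR G).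

Definition monotone {A} (leA : A -> A -> Prop) (G : game A) : Prop :=
  forall P, position G P -> locally_monotone leA P.

Inductive L5 : Type := m3 | m2 | m1 | z0 | p1.

Definition L5_val (x : L5) : nat :=
  match x with m3 => 0 | m2 => 1 | m1 => 2 | z0 => 3 | p1 => 4 end.

Definition leL5 (x y : L5) : Prop := L5_val x <= L5_val y.

Definition star : game L5 := Comp [Atom m1] [Atom m3].
Definition gM (G : game L5) : game L5 := Comp [Atom p1] [G].
Definition gP (G : game L5) : game L5 := Comp [G] [Atom m2].
Definition gPstar (G : game L5) : game L5 := Comp [G] [star].
Definition gPn (n : nat) (G : game L5) : game L5 :=
  if Nat.odd n then gP G else gPstar G.

Fixpoint Gseq (n : nat) : game L5 :=
  match n with
  | 0 => Atom z0
  | S k => gM (gPn k (Gseq k))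
  end.

(* Induction on n with a stronger invariant: -2 <= G_n, -1 <= G_n, G_n <| 1,
   G_n <= 1, {G_n | X} <= G_n for both right options X in {-2, star} of the
   P-constructions, and G_n monotone.  Every comparison required for
   G_(n+1) = {1 | {G_n | X}} unfolds in one or two steps to comparisons of
   atoms or to this invariant for G_n. *)

From Stdlib Require Import List Lia.
Import ListNotations.

Section GameOrder.

Variable A : Type.
Variable leA : A -> A -> Prop.

Lemma gle_atom a b : leA a b -> gle leA (Atom a) (Atom b).
Proof.
  intro Hab. constructor; [intros ? [] | intros ? [] | intros _; now apply glt_atom].
Qed.

Lemma glt_of_right_le gl gr H : gle leA gr H -> glt leA (Comp [gl] [gr]) H.
Proof. apply glt_right; now left. Qed.

Lemma glt_of_le_left G hl hr : gle leA G hl -> glt leA G (Comp [hl] [hr]).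
Proof. apply glt_left; now left. Qed.

Lemma gle_pair_pair gl gr hl hr :
  glt leA gl (Comp [hl] [hr]) -> glt leA (Comp [gl] [gr]) hr ->
  gle leA (Comp [gl] [gr]) (Comp [hl] [hr]).
Proof.
  intros Hl Hr.
  constructor; [intros ? [<-|[]]; exact Hl | intros ? [<-|[]]; exact Hr | intros [[]|[]]].
Qed.

Lemma gle_atom_pair a hl hr :
  glt leA (Atom a) hr -> glt leA (Atom a) (Comp [hl] [hr]) ->
  gle leA (Atom a) (Comp [hl] [hr]).
Proof.
  intros Hr Hlt. constructor; [intros ? [] | intros ? [<-|[]]; exact Hr | intros _; exact Hlt].
Qed.

Lemma gle_pair_atom gl gr b :
  glt leA gl (Atom b) -> glt leA (Comp [gl] [gr]) (Atom b) ->
  gle leA (Comp [gl] [gr]) (Atom b).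
Proof.
  intros Hl Hlt. constructor; [intros ? [<-|[]]; exact Hl | intros ? [] | intros _; exact Hlt].
Qed.

Lemma monotone_atom a : monotone leA (Atom a).
Proof.
  intros P HP. inversion HP as [| ? ? ? HX | ? ? ? HX]; subst;
    [split; intros ? [] | destruct HX ..].
Qed.

Lemma monotone_pair gl gr :
  gle leA (Comp [gl] [gr]) gl -> gle leA gr (Comp [gl] [gr]) ->
  monotone leA gl -> monotone leA gr -> monotone leA (Comp [gl] [gr]).
Proof.
  intros Hl Hr Ml Mr P HP.
  inversion HP as [| ? X ? HX HXP | ? X ? HX HXP]; subst.
  - split; intros ? [<-|[]]; assumption.
  - destruct HX as [<-|[]]. now apply Ml.
  - destruct HX as [<-|[]]. now apply Mr.
Qed.

End GameOrder.

Ltac solve_leL5 := unfold leL5 in *; simpl in *; lia.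

Lemma m3_le_star : gle leL5 (Atom m3) star.
Proof.
  apply gle_atom_pair; [apply glt_atom | apply glt_of_le_left, gle_atom]; solve_leL5.
Qed.

Lemma star_le_atom a : leL5 m1 a -> gle leL5 star (Atom a).
Proof.
  intro Ha.
  apply gle_pair_atom; [apply glt_atom | apply glt_of_right_le, gle_atom]; solve_leL5.
Qed.

Inductive P_right : game L5 -> Prop :=
| P_right_m2 : P_right (Atom m2)
| P_right_star : P_right star.

Lemma gPn_P_right k G : exists X, P_right X /\ gPn k G = Comp [G] [X].
Proof.
  unfold gPn, gP, gPstar. destruct (Nat.odd k); eexists; split; constructor.
Qed.

Lemma P_right_lt X Y : P_right X -> P_right Y -> glt leL5 X Y.
Proof.
  intros [] [].
  - apply glt_atom; solve_leL5.
  - apply glt_of_le_left, gle_atom; solve_leL5.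
  - apply glt_of_right_le, gle_atom; solve_leL5.
  - apply glt_of_right_le, m3_le_star.
Qed.

Lemma P_right_le_atom X a : P_right X -> leL5 m1 a -> gle leL5 X (Atom a).
Proof.
  intros [] Ha; [apply gle_atom; solve_leL5 | now apply star_le_atom].
Qed.

Lemma P_right_monotone X : P_right X -> monotone leL5 X.
Proof.
  intros [].
  - apply monotone_atom.
  - apply monotone_pair; [apply star_le_atom; solve_leL5 | apply m3_le_star
                         | apply monotone_atom | apply monotone_atom].
Qed.

Lemma P_right_le_P G X Y :
  gle leL5 (Atom m2) G -> gle leL5 (Atom m1) G -> P_right X -> P_right Y ->
  gle leL5 X (Comp [G] [Y]).
Proof.
  intros H2 H1 [] HY.
  - apply gle_atom_pair;
      [apply P_right_lt; [constructor | exact HY] | now apply glt_of_le_left].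
  - apply gle_pair_pair;
      [now apply glt_of_le_left | apply P_right_lt; [constructor | exact HY]].
Qed.

Lemma P_le_atom G X a :
  glt leL5 G (Atom a) -> leL5 m1 a -> P_right X -> gle leL5 (Comp [G] [X]) (Atom a).
Proof.
  intros HG Ha HX.
  apply gle_pair_atom; [exact HG | now apply glt_of_right_le, P_right_le_atom].
Qed.

Lemma M_le_p1 P : gle leL5 P (Atom p1) -> gle leL5 (gM P) (Atom p1).
Proof.
  intro HP. apply gle_pair_atom; [apply glt_atom; solve_leL5 | now apply glt_of_right_le].
Qed.

Lemma atom_le_M a G X :
  leL5 a p1 -> gle leL5 (Atom a) G -> gle leL5 (Atom a) (gM (Comp [G] [X])).
Proof.
  intros Ha HG. apply gle_atom_pair; apply glt_of_le_left; [exact HG | now apply gle_atom].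
Qed.

Lemma P_le_M G X :
  gle leL5 (Atom m2) G -> gle leL5 (Atom m1) G -> gle leL5 G (Atom p1) -> P_right X ->
  gle leL5 (Comp [G] [X]) (gM (Comp [G] [X])).
Proof.
  intros H2 H1 Hp1 HX.
  apply gle_pair_pair; [now apply glt_of_le_left | now apply glt_of_right_le, P_right_le_P].
Qed.

Lemma P_of_M_le_M G X Y :
  gle leL5 (Atom m2) G -> gle leL5 (Atom m1) G ->
  gle leL5 (gM (Comp [G] [X])) (Atom p1) -> P_right X -> P_right Y ->
  gle leL5 (Comp [gM (Comp [G] [X])] [Y]) (gM (Comp [G] [X])).
Proof.
  intros H2 H1 HM HX HY.
  apply gle_pair_pair; [now apply glt_of_le_left | now apply glt_of_right_le, P_right_le_P].
Qed.

Record Gseq_invariant (G : game L5) : Prop := {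
  m2_le : gle leL5 (Atom m2) G;
  m1_le : gle leL5 (Atom m1) G;
  lt_p1 : glt leL5 G (Atom p1);
  le_p1 : gle leL5 G (Atom p1);
  P_le : forall X, P_right X -> gle leL5 (Comp [G] [X]) G;
  invariant_monotone : monotone leL5 G }.

Lemma Gseq_invariant_z0 : Gseq_invariant (Atom z0).
Proof.
  split.
  - apply gle_atom; solve_leL5.
  - apply gle_atom; solve_leL5.
  - apply glt_atom; solve_leL5.
  - apply gle_atom; solve_leL5.
  - intros X HX. apply P_le_atom; [apply glt_atom | | exact HX]; solve_leL5.
  - apply monotone_atom.
Qed.

Lemma Gseq_invariant_M_P G X :
  Gseq_invariant G -> P_right X -> Gseq_invariant (gM (Comp [G] [X])).
Proof.
  intros [H2 H1 Hlt Hle HP Hmono] HX.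
  assert (HP1 : gle leL5 (Comp [G] [X]) (Atom p1))
    by (apply P_le_atom; [exact Hlt | solve_leL5 | exact HX]).
  assert (HM1 : gle leL5 (gM (Comp [G] [X])) (Atom p1)) by now apply M_le_p1.
  split.
  - apply atom_le_M; [solve_leL5 | exact H2].
  - apply atom_le_M; [solve_leL5 | exact H1].
  - now apply glt_of_right_le.
  - exact HM1.
  - intros Y HY. now apply P_of_M_le_M.
  - apply monotone_pair; [exact HM1 | now apply P_le_M | apply monotone_atom |].
    apply monotone_pair; [now apply HP | now apply P_right_le_P | exact Hmono |
                          now apply P_right_monotone].
Qed.

Theorem lemma3p1 : forall n : nat, monotone leL5 (Gseq n).
Proof.
  intro n. enough (Hinv : Gseq_invariant (Gseq n)) by apply Hinv.
  induction n as [|n IHn].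
  - exact Gseq_invariant_z0.
  - simpl. destruct (gPn_P_right n (Gseq n)) as (X & HX & ->).
    now apply Gseq_invariant_M_P.
Qed.
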